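(* Let $S$ be a finitely generated left cancellative semigroup with no infinite $\mathcal{R}$-classes. Suppose that for some finite generating set $A$ of $S$, the right Cayley graph $\Gamma_r(S,A)$ contains a ray $\mathbf{r}$ and there is an element $s\in S$ such that there are (directed) paths in $\Gamma_r(S,A)$ from infinitely many vertices of $\mathbf{r}$ to $s$. Then $\Omega S$ is infinite.
   Context: $S$ is left cancellative if $ax=ay$ implies $x=y$. $\mathcal{R}$ is Green's relation: $x\,\mathcal{R}\,y$ iff $xS^1=yS^1$. A digraph on $\Omega$ is a subset $\Gamma\subseteq\Omega\times\Omega$. A path is a sequence of pairwise distinct vertices $(v_0,v_1,\ldots)$ with $(v_i,v_{i+1})\in\Gamma$ (length 0 allowed); a ray is an infinite path; an anti-ray is an infinite sequence of distinct vertices with $(v_{i+1},v_i)\in\Gamma$. For infinite $\Sigma',\Sigma\subseteq\Omega$, $\Sigma'\preccurlyeq\Sigma$ means there are infinitely many pairwise vertex-disjoint paths from vertices of $\Sigma'$ to vertices of $\Sigma$. On rays and anti-rays $\preccurlyeq$ is a preorder with associated equivalence $\approx$; the ends are the $\approx$-classes of rays and anti-rays, and $\Omega\Gamma$ is the poset of ends. The right Cayley graph $\Gamma_r(S,A)$ has vertex set $S$ and edges $(x,xa)$, $x\in S$, $a\in A$. For finitely generated $S$, $\Omega S:=\Omega\Gamma_r(S,A)$ for any finite generating set $A$ (well defined up to isomorphism). *)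

From Stdlib Require Import List Classical.
Import ListNotations.
Set Implicit Arguments.

Definition finite_set {T : Type} (P : T -> Prop) : Prop :=
  exists l : list T, forall x, P x -> In x l.
Definition infinite_set {T : Type} (P : T -> Prop) : Prop := ~ finite_set P.

Definition associative {S : Type} (mul : S -> S -> S) : Prop :=
  forall x y z, mul x (mul y z) = mul (mul x y) z.

Definition left_cancellative {S : Type} (mul : S -> S -> S) : Prop :=
  forall a x y, mul a x = mul a y -> x = y.

Definition in_xS1 {S : Type} (mul : S -> S -> S) (x z : S) : Prop :=
  z = x \/ exists u, z = mul x u.

Definition greenR {S : Type} (mul : S -> S -> S) (x y : S) : Prop :=
  forall z, in_xS1 mul x z <-> in_xS1 mul y z.

Definition no_infinite_R_classes {S : Type} (mul : S -> S -> S) : Prop :=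
  forall x, finite_set (greenR mul x).

Inductive generated {S : Type} (mul : S -> S -> S) (A : list S) : S -> Prop :=
| gen_base : forall a, In a A -> generated mul A a
| gen_mul : forall x y, generated mul A x -> generated mul A y ->
            generated mul A (mul x y).

Definition generates {S : Type} (mul : S -> S -> S) (A : list S) : Prop :=
  forall x, generated mul A x.

Definition digraph (T : Type) := T -> T -> Prop.

Definition right_cayley {S : Type} (mul : S -> S -> S) (A : list S) : digraph S :=
  fun x y => exists a, In a A /\ y = mul x a.

Fixpoint chain {T : Type} (G : digraph T) (p : list T) : Prop :=
  match p with
  | x :: ((y :: _) as q) => G x y /\ chain G q
  | _ => True
  end.

Definition is_path {T : Type} (G : digraph T) (p : list T) : Prop :=
  p <> [] /\ NoDup p /\ chain G p.

Definition path_from_to {T : Type} (G : digraph T) (p : list T) (u v : T) : Prop :=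
  is_path G p /\ hd_error p = Some u /\ last p u = v.

Definition is_ray {T : Type} (G : digraph T) (r : nat -> T) : Prop :=
  (forall i j, r i = r j -> i = j) /\ (forall i, G (r i) (r (S i))).

Definition is_antiray {T : Type} (G : digraph T) (r : nat -> T) : Prop :=
  (forall i j, r i = r j -> i = j) /\ (forall i, G (r (S i)) (r i)).

Definition is_ray_or_antiray {T : Type} (G : digraph T) (r : nat -> T) : Prop :=
  is_ray G r \/ is_antiray G r.

Definition vertices {T : Type} (r : nat -> T) : T -> Prop :=
  fun v => exists i, r i = v.

Definition preceq {T : Type} (G : digraph T) (Sig' Sig : T -> Prop) : Prop :=
  exists P : nat -> list T,
    (forall n, exists u v, Sig' u /\ Sig v /\ path_from_to G (P n) u v) /\
    (forall n m x, n <> m -> In x (P n) -> In x (P m) -> False).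

Definition end_equiv {T : Type} (G : digraph T) (r r' : nat -> T) : Prop :=
  preceq G (vertices r) (vertices r') /\ preceq G (vertices r') (vertices r).

Definition is_end {T : Type} (G : digraph T) (E : (nat -> T) -> Prop) : Prop :=
  exists r, is_ray_or_antiray G r /\
    forall r', E r' <-> (is_ray_or_antiray G r' /\ end_equiv G r r').

Definition ends_infinite {T : Type} (G : digraph T) : Prop :=
  infinite_set (is_end G).

(* Edges of the right Cayley graph go from x to x a, so a path from u to v
   forces v ∈ u S^1: the preorder x S^1 ⊇ y S^1 is monotone along paths.
   Since infinitely many vertices of the ray r reach s and r is descending
   for this preorder, every vertex of r lies above s.  By left cancellation
   each translate s^k r is again a ray, and these rays define pairwise
   distinct ends: a path from s^k r to s^j r with j < k would, after
   cancelling s^j, put some r_m below s r_n, hence below every vertex of r;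
   then the whole tail of r from r_m on would lie in the R-class of r_m,
   which must be finite. *)
From Stdlib Require Import List Classical Lia FinFun PeanoNat.
Import ListNotations.
Set Implicit Arguments.

Lemma infinite_set_injective (T : Type) (P : T -> Prop) (f : nat -> T) :
  Injective f -> (forall n, P (f n)) -> infinite_set P.
Proof.
  intros f_inj Pf [l Hl].
  assert (nodup : NoDup (map f (seq 0 (S (length l))))).
  { apply Injective_map_NoDup; [exact f_inj | apply seq_NoDup]. }
  assert (sub : incl (map f (seq 0 (S (length l)))) l).
  { intros x Hx. apply in_map_iff in Hx. destruct Hx as [n [<- _]].
    apply Hl, Pf. }
  pose proof (NoDup_incl_length nodup sub) as Hlen.
  rewrite length_map, length_seq in Hlen. lia.
Qed.

Section TranslatedRays.

Variables (T : Type) (mul : T -> T -> T) (A : list T).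
Hypothesis mulA : associative mul.
Hypothesis mul_lcancel : left_cancellative mul.

Notation Gamma := (right_cayley mul A).

Lemma in_xS1_refl x : in_xS1 mul x x.
Proof. now left. Qed.

Lemma in_xS1_trans x y z : in_xS1 mul x y -> in_xS1 mul y z -> in_xS1 mul x z.
Proof.
  intros [-> | [u ->]] [-> | [v ->]].
  - now left.
  - right; now exists v.
  - right; now exists u.
  - right; exists (mul u v). now rewrite mulA.
Qed.

Lemma right_cayley_in_xS1 x y : Gamma x y -> in_xS1 mul x y.
Proof. intros [a [_ ->]]. right; now exists a. Qed.

Lemma chain_in_xS1 p : forall u d, chain Gamma (u :: p) ->
  in_xS1 mul u (last (u :: p) d).
Proof.
  induction p as [|v p IHp]; intros u d Hchain.
  - apply in_xS1_refl.
  - destruct Hchain as [Huv Hchain].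
    apply in_xS1_trans with v; [now apply right_cayley_in_xS1 | now apply IHp].
Qed.

Lemma path_from_to_in_xS1 p u v : path_from_to Gamma p u v -> in_xS1 mul u v.
Proof.
  intros [[_ [_ Hchain]] [Hhd Hlast]].
  destruct p as [|x p]; [discriminate|]. injection Hhd as ->.
  rewrite <- Hlast. now apply chain_in_xS1.
Qed.

Variable s : T.

Definition lmul_iter (k : nat) (x : T) : T := Nat.iter k (mul s) x.

Lemma lmul_iter_mulr k x u : lmul_iter k (mul x u) = mul (lmul_iter k x) u.
Proof.
  induction k as [|k IHk]; [reflexivity|].
  change (mul s (lmul_iter k (mul x u)) = mul (mul s (lmul_iter k x)) u).
  now rewrite IHk, mulA.
Qed.

Lemma lmul_iter_inj k : Injective (lmul_iter k).
Proof.
  induction k as [|k IHk]; intros x y H; [exact H|].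
  apply IHk. exact (mul_lcancel H).
Qed.

Lemma lmul_iter_in_xS1 k x y :
  in_xS1 mul (lmul_iter k x) (lmul_iter k y) -> in_xS1 mul x y.
Proof.
  intros [H | [u H]].
  - left. exact (lmul_iter_inj k _ _ H).
  - right. exists u. apply (lmul_iter_inj k). now rewrite lmul_iter_mulr.
Qed.

Lemma lmul_iter_add j d x : lmul_iter (j + d) x = lmul_iter j (lmul_iter d x).
Proof. apply Nat.iter_add. Qed.

Variable r : nat -> T.
Hypothesis r_ray : is_ray Gamma r.

Lemma ray_in_xS1 m d : in_xS1 mul (r m) (r (d + m)).
Proof.
  induction d as [|d IHd]; [apply in_xS1_refl|].
  apply in_xS1_trans with (r (d + m)); [exact IHd|].
  apply right_cayley_in_xS1, (proj2 r_ray).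
Qed.

Lemma lmul_iter_ray k : is_ray Gamma (fun i => lmul_iter k (r i)).
Proof.
  destruct r_ray as [r_inj r_edge]. split.
  - intros i j H. exact (r_inj _ _ (lmul_iter_inj k _ _ H)).
  - intros i. destruct (r_edge i) as [a [Ha ->]].
    exists a. split; [exact Ha | apply lmul_iter_mulr].
Qed.

Hypothesis R_finite : no_infinite_R_classes mul.

Lemma ray_tail_not_below m : ~ (forall n, in_xS1 mul (r n) (r m)).
Proof.
  intros below.
  apply (@infinite_set_injective _ (greenR mul (r m)) (fun k => r (k + m))).
  - intros i j H. apply (proj1 r_ray) in H. lia.
  - intros k z. split; intros Hz.
    + apply in_xS1_trans with (r m); [apply below | exact Hz].
    + apply in_xS1_trans with (r (k + m)); [apply ray_in_xS1 | exact Hz].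
  - apply R_finite.
Qed.

Hypothesis s_reached : infinite_set (fun v => vertices r v /\
  exists p, path_from_to Gamma p v s).

Lemma ray_in_xS1_s m : in_xS1 mul (r m) s.
Proof.
  apply NNPP. intros not_below. apply s_reached.
  exists (map r (seq 0 m)).
  intros x [[i <-] [p Hp]]. apply in_map, in_seq.
  destruct (Nat.lt_ge_cases i m) as [lt | ge]; [lia|].
  exfalso. apply not_below, in_xS1_trans with (r i).
  - replace i with ((i - m) + m) by lia. apply ray_in_xS1.
  - exact (path_from_to_in_xS1 Hp).
Qed.

Lemma ray_not_below_translate d n m :
  ~ in_xS1 mul (lmul_iter (S d) (r n)) (r m).
Proof.
  intros H. apply (@ray_tail_not_below m). intros k.
  apply in_xS1_trans with s; [apply ray_in_xS1_s|].
  apply in_xS1_trans with (lmul_iter (S d) (r n)); [|exact H].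
  right. now exists (lmul_iter d (r n)).
Qed.

Lemma translates_not_preceq j k : j < k ->
  ~ preceq Gamma (vertices (fun i => lmul_iter k (r i)))
                 (vertices (fun i => lmul_iter j (r i))).
Proof.
  intros jk [P [HP _]].
  destruct (HP 0) as [u [v [[n <-] [[m <-] Hp]]]].
  apply path_from_to_in_xS1 in Hp.
  replace k with (j + S (k - j - 1)) in Hp by lia.
  rewrite lmul_iter_add in Hp.
  eapply ray_not_below_translate, lmul_iter_in_xS1, Hp.
Qed.

Lemma preceq_refl (q : nat -> T) : Injective q ->
  preceq Gamma (vertices q) (vertices q).
Proof.
  intros q_inj. exists (fun n => [q n]). split.
  - intros n. exists (q n), (q n).
    split; [now exists n|]. split; [now exists n|].
    split; [|split; reflexivity].
    split; [discriminate|]. split; [|exact I].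
    constructor; [simpl; tauto | constructor].
  - intros n n' x Hnn' [<- | []] [H | []]. apply Hnn', q_inj. now symmetry.
Qed.

Definition translate_end (k : nat) : (nat -> T) -> Prop := fun r' =>
  is_ray_or_antiray Gamma r' /\ end_equiv Gamma (fun i => lmul_iter k (r i)) r'.

Lemma translate_end_is_end k : is_end Gamma (translate_end k).
Proof.
  exists (fun i => lmul_iter k (r i)). split.
  - left. apply lmul_iter_ray.
  - intros r'. unfold translate_end. tauto.
Qed.

Lemma translate_end_inj : Injective translate_end.
Proof.
  intros i j Eij.
  assert (self : translate_end i (fun n => lmul_iter i (r n))).
  { pose proof (proj1 (lmul_iter_ray i)) as inj.
    split; [left; apply lmul_iter_ray | split; now apply preceq_refl]. }
  rewrite Eij in self. destruct self as [_ [ij ji]].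
  destruct (Nat.lt_total i j) as [lt | [eq | gt]]; [| exact eq |].
  - now destruct (translates_not_preceq lt ij).
  - now destruct (translates_not_preceq gt ji).
Qed.

End TranslatedRays.

Theorem mainTheorem11 (S : Type) (mul : S -> S -> S) (A : list S)
  (Hassoc : associative mul)
  (Hgen : generates mul A)
  (Hlc : left_cancellative mul)
  (HR : no_infinite_R_classes mul)
  (r : nat -> S) (Hr : is_ray (right_cayley mul A) r)
  (s : S)
  (Hs : infinite_set (fun v => vertices r v /\
          exists p, path_from_to (right_cayley mul A) p v s)) :
  ends_infinite (right_cayley mul A).
Proof.
  apply (@infinite_set_injective _ _ (translate_end mul A s r)).
  - eapply translate_end_inj; eassumption.
  - intros k. eapply translate_end_is_end; eassumption.
Qed.
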